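(* Let $K>0$ and $0<t\le K/(2C)$. Then the function $F(x)=\Phi^K(-t\log x)$ is convex on $(0,\infty)$; with $F(0):=\Phi^K(+\infty)=\lim_{s\to\infty}\Phi^K(s)$ it is convex and continuous on $[0,\infty)$.
   Context: Let $g:\mathbb R\to\mathbb R$ be an odd bounded $C^3$ function such that $g(x)=x$ on $[-1,1]$, $0<g'(x)\le1$ on $\mathbb R$, and there is a constant $C>0$ with $0\le-g''(x)\le Cg'(x)$ for $x\in[-1,\infty)$. For $K>0$ put $\phi^K(x)=Kg(x/K)$ and $\Phi^K(x)=\int_0^x(\phi^K)'(s)^2\,ds$ (which is bounded and nondecreasing, hence has a finite limit at $+\infty$). *)

From Stdlib Require Import Reals Lra.
Open Scope R_scope.

Definition tends_to_at_pinfty (f : R -> R) (L : R) : Prop :=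
  forall eps : R, 0 < eps -> exists M : R, forall s : R, M <= s -> Rabs (f s - L) < eps.

Definition convex_on (I : R -> Prop) (f : R -> R) : Prop :=
  forall x y l : R, I x -> I y -> 0 <= l <= 1 ->
    f (l * x + (1 - l) * y) <= l * f x + (1 - l) * f y.

Definition continuous_on (I : R -> Prop) (f : R -> R) : Prop :=
  forall x : R, I x -> forall eps : R, 0 < eps ->
    exists delta : R, 0 < delta /\
      forall y : R, I y -> Rabs (y - x) < delta -> Rabs (f y - f x) < eps.

(* F(x) = Phi(-t log x) for x > 0, extended by F(0) := L (and by L for x <= 0,
   which is irrelevant on [0, infinity)). *)
Definition F_ext (Phi : R -> R) (t L : R) (x : R) : R :=
  if Rle_dec x 0 then L else Phi (- t * ln x).

(* Put v = -t ln x.  Then F'(x) = -t e^(v/t) Phi'(v) = -t e^(v/t) g'(v/K)^2, so F is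
   convex on (0,oo) as soon as v |-> e^(v/t) g'(v/K)^2 is nondecreasing.  Its derivative
   is a positive multiple of K g'(y) + 2t g''(y) with y = v/K, which is nonnegative:
   for y >= -1 because -g'' <= C g' and 2Ct <= K, for y < -1 because g'' is odd.
   Since Phi' = g'(./K)^2 <= g'(./K) = (phi^K)', Phi - phi^K is nonincreasing, so the
   nondecreasing Phi is bounded and has a limit L; this makes F continuous at 0, and
   convexity on [0,oo) follows by continuity. *)

From Stdlib Require Import Reals Lra FunctionalExtensionality.
From Coquelicot Require Import Coquelicot.
Open Scope R_scope.

Lemma derivable_pt_lim_opp_arg (f : R -> R) (x l : R) :
  derivable_pt_lim f (- x) l -> derivable_pt_lim (fun y => f (- y)) x (- l).
Proof.
  intros Hf. replace (- l) with (l * -1) by ring.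
  apply (derivable_pt_lim_comp Ropp f); [|exact Hf].
  apply (derivable_pt_lim_opp id), derivable_pt_lim_id.
Qed.

Lemma derive_even_of_odd (f f' : R -> R) :
  (forall x, f (- x) = - f x) -> (forall x, derivable_pt_lim f x (f' x)) ->
  forall x, f' (- x) = f' x.
Proof.
  intros Hodd Hf x.
  assert (A := derivable_pt_lim_opp_arg f x _ (Hf (- x))).
  assert (B : derivable_pt_lim (fun y => f (- y)) x (- f' x)).
  { apply derivable_pt_lim_ext with (opp_fct f); [intro y; now rewrite Hodd|].
    now apply derivable_pt_lim_opp. }
  pose proof (uniqueness_limite _ _ _ _ A B); lra.
Qed.

Lemma derive_odd_of_even (f f' : R -> R) :
  (forall x, f (- x) = f x) -> (forall x, derivable_pt_lim f x (f' x)) ->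
  forall x, f' (- x) = - f' x.
Proof.
  intros Hev Hf x.
  assert (A := derivable_pt_lim_opp_arg f x _ (Hf (- x))).
  assert (B : derivable_pt_lim (fun y => f (- y)) x (f' x)).
  { apply derivable_pt_lim_ext with f; [intro y; now rewrite Hev| apply Hf]. }
  pose proof (uniqueness_limite _ _ _ _ A B); lra.
Qed.

Lemma derivable_pt_lim_rescale (f f' : R -> R) (K x : R) :
  derivable_pt_lim f (x / K) (f' (x / K)) ->
  derivable_pt_lim (fun y => f (y / K)) x (f' (x / K) / K).
Proof.
  intros Hf. replace (f' (x / K) / K) with (f' (x / K) * (1 / K)) by (unfold Rdiv; ring).
  apply (derivable_pt_lim_comp (fun y => y / K) f); [|exact Hf].
  apply derivable_pt_lim_div_scal, derivable_pt_lim_id.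
Qed.

Lemma le_of_derive_nonneg (f f' : R -> R) (a b : R) :
  (forall c, a <= c <= b -> derivable_pt_lim f c (f' c)) ->
  (forall c, a <= c <= b -> 0 <= f' c) -> a <= b -> f a <= f b.
Proof.
  intros Hf Hpos Hab. destruct (Req_dec a b) as [->|Hne]; [lra|].
  destruct (MVT_cor2 f f' a b ltac:(lra) Hf) as [c [Hc Hcab]].
  assert (0 <= f' c * (b - a)) by (apply Rmult_le_pos; [apply Hpos; lra|lra]).
  lra.
Qed.

Lemma tangent_le_of_derive_nondecreasing (f f' : R -> R) (z w : R) :
  (forall c, 0 < c -> derivable_pt_lim f c (f' c)) ->
  (forall a b, 0 < a <= b -> f' a <= f' b) -> 0 < z -> 0 < w ->
  f z + f' z * (w - z) <= f w.
Proof.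
  intros Hf Hmono Hz Hw. destruct (Rtotal_order z w) as [H|[<-|H]]; [| lra |].
  - destruct (MVT_cor2 f f' z w H (fun c Hc => Hf c ltac:(lra))) as [c [E Hc]].
    assert (f' z <= f' c) by (apply Hmono; lra).
    assert (f' z * (w - z) <= f' c * (w - z)) by (apply Rmult_le_compat_r; lra).
    lra.
  - destruct (MVT_cor2 f f' w z H (fun c Hc => Hf c ltac:(lra))) as [c [E Hc]].
    assert (f' c <= f' z) by (apply Hmono; lra).
    assert (f' c * (z - w) <= f' z * (z - w)) by (apply Rmult_le_compat_r; lra).
    lra.
Qed.

Lemma convex_combination_pos (x y l : R) :
  0 < x -> 0 < y -> 0 <= l <= 1 -> 0 < l * x + (1 - l) * y.
Proof. intros Hx Hy Hl. nra. Qed.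

Lemma convex_on_pos_of_derive_nondecreasing (f f' : R -> R) :
  (forall c, 0 < c -> derivable_pt_lim f c (f' c)) ->
  (forall a b, 0 < a <= b -> f' a <= f' b) -> convex_on (fun x => 0 < x) f.
Proof.
  intros Hf Hmono x y l Hx Hy Hl.
  set (z := l * x + (1 - l) * y).
  assert (Hz : 0 < z) by now apply convex_combination_pos.
  pose proof (tangent_le_of_derive_nondecreasing f f' z x Hf Hmono Hz Hx) as Tx.
  pose proof (tangent_le_of_derive_nondecreasing f f' z y Hf Hmono Hz Hy) as Ty.
  assert (0 <= l * (f x - f z - f' z * (x - z))) by (apply Rmult_le_pos; lra).
  assert (0 <= (1 - l) * (f y - f z - f' z * (y - z))) by (apply Rmult_le_pos; lra).
  assert (l * (x - z) + (1 - l) * (y - z) = 0) by (unfold z; ring).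
  nra.
Qed.

Lemma convex_on_nonneg_of_pos (G : R -> R) :
  continuous_on (fun x => 0 <= x) G -> convex_on (fun x => 0 < x) G ->
  convex_on (fun x => 0 <= x) G.
Proof.
  intros Hc Hv x y l Hx Hy Hl.
  set (z := l * x + (1 - l) * y).
  assert (Hz : 0 <= z) by (unfold z; nra).
  destruct (Rle_lt_dec (G z) (l * G x + (1 - l) * G y)) as [ok|gap]; [exact ok|exfalso].
  (* Shift x, y (hence z) right by a small e > 0 and use convexity on (0, oo). *)
  set (d := (G z - (l * G x + (1 - l) * G y)) / 3).
  assert (Hd : 0 < d) by (unfold d; lra).
  destruct (Hc x Hx d Hd) as [dx [Hdx Px]].
  destruct (Hc y Hy d Hd) as [dy [Hdy Py]].
  destruct (Hc z Hz d Hd) as [dz [Hdz Pz]].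
  set (e := Rmin dx (Rmin dy dz) / 2).
  assert (He : 0 < e /\ e < dx /\ e < dy /\ e < dz).
  { unfold e. pose proof (Rmin_l dx (Rmin dy dz)). pose proof (Rmin_r dx (Rmin dy dz)).
    pose proof (Rmin_l dy dz). pose proof (Rmin_r dy dz).
    assert (0 < Rmin dx (Rmin dy dz)) by (repeat apply Rmin_pos; lra). lra. }
  assert (Hshift : forall u, Rabs (u + e - u) = e).
  { intro u. replace (u + e - u) with e by ring. apply Rabs_pos_eq; lra. }
  specialize (Px (x + e) ltac:(lra) ltac:(rewrite Hshift; lra)).
  specialize (Py (y + e) ltac:(lra) ltac:(rewrite Hshift; lra)).
  specialize (Pz (z + e) ltac:(lra) ltac:(rewrite Hshift; lra)).
  apply Rabs_def2 in Px, Py, Pz.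
  pose proof (Hv (x + e) (y + e) l ltac:(lra) ltac:(lra) Hl) as V.
  replace (l * (x + e) + (1 - l) * (y + e)) with (z + e) in V by (unfold z; ring).
  assert (l * G (x + e) <= l * (G x + d)) by (apply Rmult_le_compat_l; lra).
  assert ((1 - l) * G (y + e) <= (1 - l) * (G y + d)) by (apply Rmult_le_compat_l; lra).
  unfold d in *. lra.
Qed.

Lemma tends_to_at_pinfty_of_nondecreasing (f : R -> R) (B : R) :
  (forall u v, u <= v -> f u <= f v) -> (forall x, f x <= B) ->
  exists L, tends_to_at_pinfty f L.
Proof.
  intros Hmono HB.
  set (E := fun v => exists x, v = f x).
  destruct (completeness E) as [L [HLub HLleast]].
  - exists B. intros v [x ->]. apply HB.
  - exists (f 0), 0. reflexivity.
  - exists L. intros eps Heps.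
    destruct (Classical_Prop.classic (exists x0, L - eps < f x0)) as [[x0 Hx0]|Hnone].
    + exists x0. intros s Hs.
      assert (f s <= L) by (apply HLub; now exists s).
      pose proof (Hmono x0 s Hs). apply Rabs_def1; lra.
    + exfalso. assert (L <= L - eps); [|lra].
      apply HLleast. intros v [x ->]. apply Rnot_lt_le. intro Hx. apply Hnone. now exists x.
Qed.

Lemma continuity_pt_ball (f : R -> R) (x : R) : continuity_pt f x ->
  forall eps, 0 < eps -> exists d, 0 < d /\ forall y, Rabs (y - x) < d -> Rabs (f y - f x) < eps.
Proof.
  intros Hc eps Heps. destruct (Hc eps Heps) as [d [Hd H]]. exists d; split; [exact Hd|].
  intros y Hy. destruct (Req_dec y x) as [->|Hne].
  - rewrite Rminus_diag, Rabs_R0; exact Heps.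
  - apply (H y). repeat split; auto.
Qed.

Lemma F_ext_pos (Phi : R -> R) (t L x : R) : 0 < x -> F_ext Phi t L x = Phi (- t * ln x).
Proof. intros Hx. unfold F_ext. destruct (Rle_dec x 0); [lra|reflexivity]. Qed.

Lemma F_ext_continuous_on (Phi : R -> R) (t L : R) :
  0 < t -> continuity Phi -> tends_to_at_pinfty Phi L ->
  continuous_on (fun x => 0 <= x) (F_ext Phi t L).
Proof.
  intros Ht HPhi Hlim x Hx eps Heps.
  assert (HF0 : F_ext Phi t L 0 = L) by (unfold F_ext; destruct (Rle_dec 0 0); lra).
  destruct (Req_dec x 0) as [->|Hx0].
  - destruct (Hlim eps Heps) as [M HM].
    exists (exp (- M / t)). split; [apply exp_pos|].
    intros y Hy Hyd. rewrite HF0.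
    destruct (Req_dec y 0) as [->|Hy0]; [rewrite HF0, Rminus_diag, Rabs_R0; exact Heps|].
    rewrite F_ext_pos by lra. apply HM.
    rewrite Rminus_0_r, Rabs_pos_eq in Hyd by lra.
    assert (ln y < - M / t) by (rewrite <- (ln_exp (- M / t)); apply ln_increasing; lra).
    assert (t * ln y < t * (- M / t)) by (apply Rmult_lt_compat_l; lra).
    replace (t * (- M / t)) with (- M) in * by (field; lra). lra.
  - assert (Hcx : continuity_pt (fun y => Phi (- t * ln y)) x).
    { apply (continuity_pt_comp (fun y => - t * ln y) Phi); [|apply HPhi].
      apply derivable_continuous_pt. exists (- t * / x).
      apply derivable_pt_lim_scal, derivable_pt_lim_ln; lra. }
    destruct (continuity_pt_ball _ x Hcx eps Heps) as [d [Hd Hball]].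
    exists (Rmin d x). split; [apply Rmin_pos; lra|].
    intros y Hy Hyd. pose proof (Rmin_l d x). pose proof (Rmin_r d x).
    assert (0 < y) by (apply Rabs_def2 in Hyd; lra).
    rewrite !F_ext_pos by lra. apply Hball. lra.
Qed.

Lemma F_ext_convex_on (Phi : R -> R) (t L : R) :
  continuous_on (fun x => 0 <= x) (F_ext Phi t L) ->
  convex_on (fun x => 0 < x) (fun x => Phi (- t * ln x)) ->
  convex_on (fun x => 0 <= x) (F_ext Phi t L).
Proof.
  intros Hc Hv. apply convex_on_nonneg_of_pos; [exact Hc|].
  intros x y l Hx Hy Hl.
  rewrite !F_ext_pos by (try apply convex_combination_pos; assumption).
  now apply Hv.
Qed.

Lemma derivable_pt_lim_RiemannInt_0 (f Phi : R -> R) :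
  continuity f ->
  (forall x, exists pr : Riemann_integrable f 0 x, Phi x = RiemannInt pr) ->
  forall x, derivable_pt_lim Phi x (f x).
Proof.
  intros Hf HPhi x.
  assert (Hcont : forall z, continuous f z) by (intro z; now apply continuity_pt_filterlim).
  apply derivable_pt_lim_ext with (RInt f 0).
  { intro y. destruct (HPhi y) as [pr ->]. apply RInt_Reals. }
  apply is_derive_Reals, is_derive_RInt with 0; [|apply Hcont].
  apply filter_forall. intro b.
  apply (@RInt_correct R_CompleteNormedModule), (@ex_RInt_continuous R_CompleteNormedModule).
  intros; apply Hcont.
Qed.

Section PhiK.

Variables (g g1 g2 : R -> R) (C K t : R).
Hypothesis Hg1 : forall x, derivable_pt_lim g x (g1 x).
Hypothesis Hg2 : forall x, derivable_pt_lim g1 x (g2 x).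
Hypothesis Hodd : forall x, g (- x) = - g x.
Hypothesis Hg1pos : forall x, 0 < g1 x <= 1.
Hypothesis Hg2C : forall x, -1 <= x -> 0 <= - g2 x <= C * g1 x.
Hypothesis HK : 0 < K.
Hypothesis Ht : 0 < t.
Hypothesis HCt : 2 * C * t <= K.

Lemma K_g1_add_2t_g2_ge0 (y : R) : 0 <= K * g1 y + 2 * t * g2 y.
Proof.
  destruct (Hg1pos y) as [Hg1y _].
  destruct (Rle_lt_dec (-1) y) as [Hy|Hy].
  - destruct (Hg2C y Hy) as [_ Hbound].
    assert (0 <= g1 y * (K - 2 * C * t)) by (apply Rmult_le_pos; lra).
    assert (0 <= t * (C * g1 y + g2 y)) by (apply Rmult_le_pos; lra).
    nra.
  - assert (Hodd2 := derive_odd_of_even g1 g2 (derive_even_of_odd g g1 Hodd Hg1) Hg2).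
    assert (0 <= g2 y).
    { replace y with (- - y) by ring. rewrite Hodd2.
      destruct (Hg2C (- y)); lra. }
    nra.
Qed.

Lemma derivable_pt_lim_sq_g1 (w : R) :
  derivable_pt_lim (fun w => g1 (w / K) ^ 2) w (2 * g1 (w / K) * (g2 (w / K) / K)).
Proof.
  replace (2 * g1 (w / K) * (g2 (w / K) / K))
    with (INR 2 * g1 (w / K) ^ Nat.pred 2 * (g2 (w / K) / K)) by (simpl; ring).
  apply (derivable_pt_lim_comp (fun w => g1 (w / K)) (fun y => y ^ 2)).
  - apply derivable_pt_lim_rescale, Hg2.
  - apply derivable_pt_lim_pow.
Qed.

Lemma sq_g1_exp_nondecreasing (u v : R) :
  u <= v -> g1 (u / K) ^ 2 * exp (u / t) <= g1 (v / K) ^ 2 * exp (v / t).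
Proof.
  apply le_of_derive_nonneg with (f := fun w => g1 (w / K) ^ 2 * exp (w / t))
    (f' := fun w => g1 (w / K) * exp (w / t) * (K * g1 (w / K) + 2 * t * g2 (w / K)) / (K * t)).
  - intros w _.
    pose proof (derivable_pt_lim_sq_g1 w) as Hsq.
    assert (Hexp : derivable_pt_lim (fun w => exp (w / t)) w (exp (w / t) / t)).
    { apply derivable_pt_lim_rescale with (f := exp), derivable_pt_lim_exp. }
    replace (g1 (w / K) * exp (w / t) * (K * g1 (w / K) + 2 * t * g2 (w / K)) / (K * t))
      with (2 * g1 (w / K) * (g2 (w / K) / K) * exp (w / t) + g1 (w / K) ^ 2 * (exp (w / t) / t))
      by (field; lra).
    exact (derivable_pt_lim_mult _ _ w _ _ Hsq Hexp).
  - intros w _. destruct (Hg1pos (w / K)).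
    pose proof (exp_pos (w / t)). pose proof (K_g1_add_2t_g2_ge0 (w / K)).
    apply Rmult_le_pos; [|apply Rlt_le, Rinv_0_lt_compat; nra].
    apply Rmult_le_pos; [|lra]. nra.
Qed.

Variable Phi : R -> R.
Hypothesis HPhi : forall x, derivable_pt_lim Phi x (g1 (x / K) ^ 2).

Lemma Phi_nondecreasing (u v : R) : u <= v -> Phi u <= Phi v.
Proof. apply le_of_derive_nonneg with (fun x => g1 (x / K) ^ 2); auto using pow2_ge_0. Qed.

Lemma convex_on_Phi_neg_t_ln : convex_on (fun x => 0 < x) (fun x => Phi (- t * ln x)).
Proof.
  apply convex_on_pos_of_derive_nondecreasing
    with (fun x => g1 (- t * ln x / K) ^ 2 * (- t * / x)).
  - intros x Hx. apply (derivable_pt_lim_comp (fun x => - t * ln x) Phi); [|apply HPhi].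
    apply derivable_pt_lim_scal, derivable_pt_lim_ln, Hx.
  - assert (Hinv : forall x, 0 < x -> / x = exp (- t * ln x / t)).
    { intros x Hx. replace (- t * ln x / t) with (- ln x) by (field; lra).
      now rewrite exp_Ropp, exp_ln. }
    intros a b [Ha Hab]. rewrite (Hinv a), (Hinv b) by lra.
    assert (ln a <= ln b) by (apply ln_le; lra).
    pose proof (sq_g1_exp_nondecreasing (- t * ln b) (- t * ln a) ltac:(nra)).
    nra.
Qed.

Lemma Phi_le (M : R) : (forall x, Rabs (g x) <= M) -> forall x, Phi x <= Phi 0 + K * M.
Proof.
  intros HM x.
  assert (HM0 : 0 <= M) by (specialize (HM 0); pose proof (Rabs_pos (g 0)); lra).
  destruct (Rle_lt_dec 0 x) as [Hx|Hx].
  - assert (Hdiff : K * g (0 / K) - Phi 0 <= K * g (x / K) - Phi x).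
    { apply le_of_derive_nonneg with (f := fun s => K * g (s / K) - Phi s)
        (f' := fun s => K * (g1 (s / K) / K) - g1 (s / K) ^ 2); [| |exact Hx].
      - intros c _. apply derivable_pt_lim_minus; [|apply HPhi].
        apply derivable_pt_lim_scal, derivable_pt_lim_rescale, Hg1.
      - intros c _. destruct (Hg1pos (c / K)).
        replace (K * (g1 (c / K) / K)) with (g1 (c / K)) by (field; lra). nra. }
    assert (Hg0 : g 0 = 0) by (pose proof (Hodd 0); rewrite Ropp_0 in *; lra).
    rewrite Rdiv_0_l, Hg0 in Hdiff.
    pose proof (Rle_abs (g (x / K))). pose proof (HM (x / K)).
    assert (K * g (x / K) <= K * M) by (apply Rmult_le_compat_l; lra). lra.
  - pose proof (Phi_nondecreasing x 0 ltac:(lra)). nra.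
Qed.

End PhiK.

Theorem mainTheorem13
  (g g1 g2 g3 : R -> R) (C K t : R)
  (Hg1 : forall x, derivable_pt_lim g x (g1 x))
  (Hg2 : forall x, derivable_pt_lim g1 x (g2 x))
  (Hg3 : forall x, derivable_pt_lim g2 x (g3 x))
  (Hg3c : continuity g3)
  (Hodd : forall x, g (- x) = - g x)
  (Hbdd : exists M, forall x, Rabs (g x) <= M)
  (Hid : forall x, -1 <= x <= 1 -> g x = x)
  (Hg1pos : forall x, 0 < g1 x <= 1)
  (HC : 0 < C)
  (Hg2C : forall x, -1 <= x -> 0 <= - g2 x <= C * g1 x)
  (HK : 0 < K)
  (dphi : R -> R)
  (Hdphi : forall s, derivable_pt_lim (fun x => K * g (x / K)) s (dphi s))
  (Phi : R -> R)
  (HPhi : forall x, exists pr : Riemann_integrable (fun s => (dphi s) ^ 2) 0 x,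
            Phi x = RiemannInt pr)
  (Ht : 0 < t <= K / (2 * C)) :
  convex_on (fun x => 0 < x) (fun x => Phi (- t * ln x)) /\
  exists L : R, tends_to_at_pinfty Phi L /\
    convex_on (fun x => 0 <= x) (F_ext Phi t L) /\
    continuous_on (fun x => 0 <= x) (F_ext Phi t L).
Proof.
  destruct Ht as [Ht HtC].
  assert (HCt : 2 * C * t <= K).
  { apply Rmult_le_compat_l with (r := 2 * C) in HtC; [|lra].
    replace (2 * C * (K / (2 * C))) with K in HtC by (field; lra). lra. }
  assert (Edphi : dphi = fun s => g1 (s / K)).
  { apply functional_extensionality. intro s. apply (uniqueness_limite _ s _ _ (Hdphi s)).
    replace (g1 (s / K)) with (K * (g1 (s / K) / K)) by (field; lra).
    apply derivable_pt_lim_scal, derivable_pt_lim_rescale, Hg1. }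
  subst dphi.
  assert (DPhi : forall x, derivable_pt_lim Phi x (g1 (x / K) ^ 2)).
  { apply derivable_pt_lim_RiemannInt_0; [|exact HPhi].
    intro s. apply derivable_continuous_pt. eexists. apply derivable_pt_lim_sq_g1, Hg2. }
  destruct Hbdd as [M HM].
  destruct (tends_to_at_pinfty_of_nondecreasing Phi (Phi 0 + K * M)) as [L HL].
  { exact (Phi_nondecreasing g1 K Phi DPhi). }
  { exact (Phi_le g g1 K Hg1 Hodd Hg1pos HK Phi DPhi M HM). }
  assert (Hconv := convex_on_Phi_neg_t_ln g g1 g2 C K t Hg1 Hg2 Hodd Hg1pos Hg2C HK Ht HCt Phi DPhi).
  assert (Hcont : continuous_on (fun x => 0 <= x) (F_ext Phi t L)).
  { apply F_ext_continuous_on; [exact Ht| |exact HL].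
    intro x. apply derivable_continuous_pt. eexists. apply DPhi. }
  split; [exact Hconv|].
  exists L. repeat split; [exact HL|apply F_ext_convex_on|exact Hcont]; assumption.
Qed.
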